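(* Let $(X,d)$ be a complete $\mathrm{CAT}(0)$-space, $\Omega\subset X$ a bounded set satisfying Condition (TB) with constant $\mathbf m$, and $\varepsilon:=(6\mathbf m)^{-1}$. Let $\xi:[0,\ell)\to X$ be a self-contracted curve with $\xi([0,\ell))\subset\Omega$. Fix $\tau\in[0,\ell)$ and let $\bar\gamma_\tau\in\Sigma_{\xi(\tau)}X$ satisfy $\angle_{\xi(\tau)}(\bar\gamma_\tau,\gamma_{\xi(\tau)\xi(t)})\le\arccos(3\varepsilon)$ for all $t\in(\tau,\ell)$ with $\xi(t)\ne\xi(\tau)$ (such $\bar\gamma_\tau$ exists). For $\sigma>0$ let $$\Omega_{\tau,\sigma}:=\{x\in X:\ 0<d(\xi(\tau),x)<\sigma,\ \angle_{\xi(\tau)}(\gamma_{\xi(\tau)x},\bar\gamma_\tau)\ge\pi-2\arcsin(\varepsilon/2)\},$$ and for $x\in\Omega_{\tau,\sigma}$ let $V_x:=\gamma_{x\xi(\tau)}\in\Sigma_xX$. Then for all $T\in(\tau,\ell)$, $x\in\Omega_{\tau,\sigma}$ and $\gamma\in\Sigma_xX$ with $\angle_x(V_x,\gamma)\le2\arcsin(\varepsilon/2)$, $$\big|\Pi_\gamma(\Xi(T))\big|\le\big|\Pi_\gamma(\Xi(\tau))\big|-\frac{\varepsilon}{2}\,d\big(\xi(\tau),\xi(T)\big).$$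
   Context: A geodesic metric space $(X,d)$ is a $\mathrm{CAT}(0)$-space if for all $x,y,z\in X$ and every minimal geodesic $\gamma$ from $y$ to $z$, $d^2(x,\gamma(s))\le(1-s)d^2(x,y)+sd^2(x,z)-(1-s)sd^2(y,z)$ for all $s\in[0,1]$; minimal geodesics are unique, denoted $\gamma_{xy}$. For geodesics $\gamma,\eta$ from $x$, $\angle_x(\gamma,\eta):=\lim_{s,t\to0}\tilde\angle[\gamma(s)x\eta(t)]$ with $\cos\tilde\angle[yxz]=\frac{d^2(x,y)+d^2(x,z)-d^2(y,z)}{2d(x,y)d(x,z)}$. The space of directions $\Sigma_xX$ is the completion, with respect to $\angle_x$, of $\{\gamma_{xy}:y\ne x\}$ modulo $\angle_x=0$. The tangent cone $C_xX$ is the Euclidean cone $(\Sigma_xX\times[0,\infty))/(\Sigma_xX\times\{0\})$ with origin $o_x$ and metric $d_x((\gamma,s),(\eta,t))=\sqrt{s^2+t^2-2st\cos\angle_x(\gamma,\eta)}$. Define $\log_x:X\to C_xX$, $\log_x(y)=(\gamma_{xy},d(x,y))$ ($\log_x(x)=o_x$); for $\gamma\in\Sigma_xX$, $P_\gamma:C_xX\to\mathbb{R}$, $P_\gamma((\eta,s))=s\cos\angle_x(\gamma,\eta)$, $P_\gamma(o_x)=0$; for $\Xi\subset X$, $\Pi_\gamma(\Xi)$ is the smallest closed interval containing $P_\gamma(\log_x(\Xi))$, and $|\cdot|$ is Lebesgue measure. Condition (TB) on $\Omega$ with constant $\mathbf m$: for every $x\in\Omega$, every subset $\Delta\subset\Sigma_xX$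 with $\angle_x(\gamma,\eta)\ge\pi/3$ for all distinct $\gamma,\eta\in\Delta$ has cardinality at most $\mathbf m$. A map $\xi:[0,\ell)\to X$ (not necessarily continuous) is self-contracted if $d(\xi(t_2),\xi(t_3))\le d(\xi(t_1),\xi(t_3))$ for all $0\le t_1\le t_2\le t_3<\ell$; $\Xi(t):=\xi([t,\ell))$. *)

From Stdlib Require Import Reals Lra ClassicalEpsilon.
Open Scope R_scope.
Set Implicit Arguments.

Section Defs.
Variable X : Type.
Variable d : X -> X -> R.

Definition is_metric : Prop :=
  (forall x y, 0 <= d x y) /\ (forall x y, d x y = 0 <-> x = y) /\
  (forall x y, d x y = d y x) /\ (forall x y z, d x z <= d x y + d y z).

Definition min_geodesic (g : R -> X) (y z : X) : Prop :=
  g 0 = y /\ g 1 = z /\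
  forall s t, 0 <= s <= 1 -> 0 <= t <= 1 -> d (g s) (g t) = Rabs (s - t) * d y z.

Definition is_geodesic_space : Prop :=
  forall y z, exists g, min_geodesic g y z.

Definition CAT0_ineq : Prop :=
  forall x y z g, min_geodesic g y z -> forall s, 0 <= s <= 1 ->
    (d x (g s))^2 <= (1 - s) * (d x y)^2 + s * (d x z)^2 - (1 - s) * s * (d y z)^2.

Definition complete_space : Prop :=
  forall u : nat -> X,
    (forall e, 0 < e -> exists N, forall n m, (n >= N)%nat -> (m >= N)%nat -> d (u n) (u m) < e) ->
    exists l, forall e, 0 < e -> exists N, forall n, (n >= N)%nat -> d (u n) l < e.

Definition complete_CAT0 : Prop :=
  is_metric /\ is_geodesic_space /\ CAT0_ineq /\ complete_space.

Definition comp_angle (y x z : X) : R :=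
  acos (((d x y)^2 + (d x z)^2 - (d y z)^2) / (2 * d x y * d x z)).

(* p lies on the (unique) minimal geodesic from x to y *)
Definition on_segment (x y p : X) : Prop := d x p + d p y = d x y.

(* A is the Alexandrov angle at x between gamma_{xy} and gamma_{xz}:
   the limit of comp_angle[gamma_{xy}(s) x gamma_{xz}(t)] as s,t -> 0+ *)
Definition angle_limit (x y z : X) (A : R) : Prop :=
  forall e, 0 < e -> exists delta, 0 < delta /\
    forall p q, on_segment x y p -> on_segment x z q ->
      0 < d x p < delta -> 0 < d x q < delta ->
      Rabs (comp_angle p x q - A) < e.

Definition gangle (x y z : X) : R :=
  epsilon (inhabits 0) (fun A => angle_limit x y z A).

(* Elements of Sigma_x X: the completion of {gamma_{xy} : y <> x} w.r.t.
   the angle; represented by angle-Cauchy sequences of points y_n <> x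
   (the direction gamma_{xy} is the constant sequence fun _ => y). *)
Definition is_dir (x : X) (U : nat -> X) : Prop :=
  (forall n, U n <> x) /\
  forall e, 0 < e -> exists N, forall n m, (n >= N)%nat -> (m >= N)%nat ->
    gangle x (U n) (U m) < e.

(* angle in Sigma_x X between two directions (extension by continuity) *)
Definition dangle (x : X) (U V : nat -> X) : R :=
  epsilon (inhabits 0) (fun A => Un_cv (fun n => gangle x (U n) (V n)) A).

Definition Pproj (x : X) (U : nat -> X) (y : X) : R :=
  match excluded_middle_informative (y = x) with
  | left _ => 0
  | right _ => d x y * cos (dangle x U (fun _ => y))
  end.

End Defs.

Definition Rsup (S : R -> Prop) : R := epsilon (inhabits 0) (fun m => is_lub S m).
Definition Rinf (S : R -> Prop) : R := - Rsup (fun r => S (- r)).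

(* Lebesgue measure of the smallest closed interval containing S (S nonempty bounded) *)
Definition hull_length (S : R -> Prop) : R := Rsup S - Rinf S.

Definition Pi_length {X} (d : X -> X -> R) (x : X) (U : nat -> X) (Xi : X -> Prop) : R :=
  hull_length (fun r => exists y, Xi y /\ r = Pproj d x U y).

Definition cond_TB {X} (d : X -> X -> R) (Omega : X -> Prop) (m : nat) : Prop :=
  forall x, Omega x -> forall (n : nat) (D : nat -> nat -> X),
    (forall i, (i < n)%nat -> is_dir d x (D i)) ->
    (forall i j, (i < n)%nat -> (j < n)%nat -> i <> j -> dangle d x (D i) (D j) >= PI / 3) ->
    (n <= m)%nat.

Definition bounded_set {X} (d : X -> X -> R) (Omega : X -> Prop) : Prop :=
  exists B, forall x y, Omega x -> Omega y -> d x y <= B.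

(* domain [0, l); l = None means l = +infinity *)
Definition in_dom (l : option R) (t : R) : Prop :=
  0 <= t /\ match l with Some l => t < l | None => True end.

Definition self_contracted {X} (d : X -> X -> R) (l : option R) (xi : R -> X) : Prop :=
  forall t1 t2 t3, in_dom l t1 -> in_dom l t3 -> t1 <= t2 <= t3 ->
    d (xi t2) (xi t3) <= d (xi t1) (xi t3).

Definition Xi_set {X} (l : option R) (xi : R -> X) (t : R) : X -> Prop :=
  fun y => exists s, t <= s /\ in_dom l s /\ y = xi s.

(* Write o := xi tau, y := xi s with s >= T, th := 2 asin (e/2) and A0 := acos (3 e).
   Self-contraction gives d(o, xi T) <= 2 d(o, y).  The direction from o to x is almost
   opposite to bargamma, while y lies in the cone of aperture A0 around bargamma, so the
   Alexandrov angle at o between x and y is at least PI - th - A0.  Alexandrov angles are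
   bounded by comparison angles, so projecting the Euclidean comparison triangle of x, o, y
   onto a direction within th of the direction towards o gives
   P(y) >= P(o) + cos (2 th + A0) d(o, y) >= P(o) + e d(o, y).  Thus the projection of
   Xi(T) lies above P(o) + e/2 d(o, xi T), while P(o) is in the projection of Xi(tau),
   which contains that of Xi(T). *)

From Stdlib Require Import Reals Lra Lia Psatz ClassicalEpsilon Classical.
Open Scope R_scope.

(** * Real analysis and plane trigonometry *)

Lemma acos_antimono u v : -1 <= u <= 1 -> -1 <= v <= 1 -> u <= v -> acos v <= acos u.
Proof.
  intros Hu Hv Huv. pose proof (acos_bound u); pose proof (acos_bound v).
  apply cos_decr_0; try lra. rewrite !cos_acos; lra.
Qed.

Lemma asin_nonneg u : 0 <= u <= 1 -> 0 <= asin u.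
Proof.
  intros Hu. pose proof (asin_bound u); pose proof PI_RGT_0.
  apply sin_incr_0; try lra. rewrite sin_0, sin_asin; lra.
Qed.

Lemma ratio_in_unit_interval a b : 0 < b -> -b <= a <= b -> -1 <= a / b <= 1.
Proof.
  intros Hb Hab. assert (E : a / b * b = a) by (field; lra).
  split; apply (Rmult_le_reg_r b); nra.
Qed.

Lemma div_in_01 r D : 0 < D -> 0 <= r <= D -> 0 <= r / D <= 1.
Proof.
  intros HD Hr. assert (E : r / D * D = r) by (field; lra).
  split; apply (Rmult_le_reg_r D); nra.
Qed.

Lemma nonneg_inf_exists (S : R -> Prop) : (exists r, S r) -> (forall r, S r -> 0 <= r) ->
  exists m, 0 <= m /\ (forall r, S r -> m <= r) /\ forall e, 0 < e -> exists r, S r /\ r < m + e.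
Proof.
  intros [r0 Hr0] Hpos.
  destruct (completeness (fun r => S (- r))) as [M [Hub Hlub]].
  - exists 0. intros r Hr. apply Hpos in Hr. lra.
  - exists (- r0). now rewrite Ropp_involutive.
  - exists (- M). repeat split.
    + assert (M <= 0) by (apply Hlub; intros r Hr; apply Hpos in Hr; lra). lra.
    + intros r Hr. assert (- r <= M) by (apply Hub; now rewrite Ropp_involutive). lra.
    + intros e He. apply NNPP. intros Hno.
      assert (M <= M - e); [|lra].
      apply Hlub. intros r Hr. apply Rnot_lt_le. intros Hlt.
      apply Hno. exists (- r). split; [assumption | lra].
Qed.

Lemma small_scale M s : 0 < M -> 0 < s -> exists t, 0 < t /\ t < M /\ s * t < M.
Proof.
  intros HM Hs. exists (M / (1 + s) / 2).
  assert (E : M / (1 + s) * (1 + s) = M) by (field; lra).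
  assert (0 < M / (1 + s)) by (apply Rdiv_lt_0_compat; lra).
  repeat split; nra.
Qed.

Lemma Un_cv_const c : Un_cv (fun _ => c) c.
Proof. intros e He. exists 0%nat. intros. unfold R_dist. rewrite Rminus_diag, Rabs_R0. auto. Qed.

Lemma Rsup_abs_bounded (S : R -> Prop) K : (exists r, S r) -> (forall r, S r -> Rabs r <= K) ->
  is_lub S (Rsup S).
Proof.
  intros Hne HK. unfold Rsup. apply epsilon_spec.
  destruct (completeness S) as [M HM]; eauto.
  exists K. intros r Hr. apply HK in Hr. pose proof (Rle_abs r). lra.
Qed.

Lemma hull_length_shrink (S1 S2 : R -> Prop) K p0 k :
  (forall r, S1 r -> S2 r) -> (exists r, S1 r) -> S2 p0 -> (forall r, S2 r -> Rabs r <= K) ->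
  (forall r, S1 r -> p0 + k <= r) ->
  hull_length S1 <= hull_length S2 - k.
Proof.
  intros Hsub [r1 Hr1] Hp0 HK Hlow.
  assert (HK1 : forall r, S1 r -> Rabs r <= K) by auto.
  assert (HKn : forall (S : R -> Prop), (forall r, S r -> Rabs r <= K) ->
            forall r, S (- r) -> Rabs r <= K).
  { intros S HS r Hr. rewrite <- Rabs_Ropp. auto. }
  destruct (Rsup_abs_bounded S1 K) as [U1 L1]; eauto.
  destruct (Rsup_abs_bounded S2 K) as [U2 _]; eauto.
  destruct (Rsup_abs_bounded (fun r => S1 (- r)) K) as [_ W1]; eauto.
  { exists (- r1). now rewrite Ropp_involutive. }
  destruct (Rsup_abs_bounded (fun r => S2 (- r)) K) as [V2 _]; eauto.
  { exists (- p0). now rewrite Ropp_involutive. }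
  unfold hull_length, Rinf.
  assert (Rsup S1 <= Rsup S2) by (apply L1; intros r Hr; apply U2; auto).
  assert (- p0 <= Rsup (fun r => S2 (- r))) by (apply V2; simpl; rewrite Ropp_involutive; auto).
  assert (Rsup (fun r => S1 (- r)) <= - (p0 + k)).
  { apply W1. intros r Hr. apply Hlow in Hr. lra. }
  lra.
Qed.

Lemma cos_sin_chord_angle e : 0 <= e <= 1 ->
  cos (2 * asin (e / 2)) = 1 - e ^ 2 / 2 /\
  sin (2 * asin (e / 2)) = e * sqrt (1 - e ^ 2 / 4).
Proof.
  intros He. split.
  - rewrite cos_2a_sin, sin_asin by lra. field.
  - rewrite sin_2a, sin_asin, cos_asin by lra. unfold Rsqr.
    replace (1 - e / 2 * (e / 2)) with (1 - e ^ 2 / 4) by field. field.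
Qed.

Lemma chord_angle_le_PI4 e : 0 <= e <= 1/6 -> 0 <= 2 * asin (e / 2) <= PI / 4.
Proof.
  intros He. pose proof (asin_nonneg (e / 2) ltac:(lra)); pose proof (asin_bound (e / 2)).
  split; [lra|]. pose proof PI_RGT_0.
  apply cos_decr_0; try lra.
  rewrite cos_PI4, (proj1 (cos_sin_chord_angle e ltac:(lra))).
  assert (H2 : sqrt 2 ^ 2 = 2) by (apply pow2_sqrt; lra).
  pose proof (sqrt_pos 2).
  assert (72 / 71 <= sqrt 2) by nra.
  apply Rmult_le_reg_r with (sqrt 2); [lra|].
  unfold Rdiv. rewrite Rmult_1_l, Rinv_l by lra. nra.
Qed.

(* Expanding the cosine reduces the second bound to a polynomial inequality in [e ^ 2]. *)
Lemma angle_budget e : 0 < e <= 1/6 ->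
  2 * (2 * asin (e / 2)) + acos (3 * e) <= PI /\
  e <= cos (2 * (2 * asin (e / 2)) + acos (3 * e)).
Proof.
  intros He.
  pose proof (chord_angle_le_PI4 e ltac:(lra)) as Hth.
  destruct (cos_sin_chord_angle e ltac:(lra)) as [Hc Hs].
  set (th := 2 * asin (e / 2)) in *.
  assert (Ha : acos (3 * e) <= PI / 2) by (rewrite <- acos_0; apply acos_antimono; lra).
  split; [lra|].
  set (S := sqrt (1 - e ^ 2 / 4)) in *.
  assert (HS : 0 <= S /\ S ^ 2 = 1 - e ^ 2 / 4) by (split; [apply sqrt_pos | apply pow2_sqrt; nra]).
  rewrite cos_plus, cos_acos, sin_acos, cos_2a, sin_2a, Hc, Hs by lra.
  set (S1 := sqrt (1 - (3 * e)²)).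
  assert (HS1 : 0 <= S1 /\ S1 ^ 2 = 1 - 9 * e ^ 2).
  { split; [apply sqrt_pos|]. unfold S1. rewrite pow2_sqrt; unfold Rsqr; nra. }
  set (c := 1 - e ^ 2 / 2). set (L := 1 - 3 * e ^ 2 + 3 / 4 * e ^ 4).
  assert (HL : 0 <= L) by (unfold L; nra).
  assert (Hsq : (S * S1 * c) ^ 2 <= L ^ 2).
  { replace ((S * S1 * c) ^ 2) with (S ^ 2 * S1 ^ 2 * c ^ 2) by ring.
    destruct HS as [_ ->]; destruct HS1 as [_ ->]. unfold L, c.
    assert (0 < e ^ 2 <= 1 / 36) by nra. set (u := e ^ 2) in *.
    replace (e ^ 4) with (u ^ 2) by (unfold u; ring). nra. }
  assert (Hprod : S * S1 * c <= L) by nra.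
  replace (e * S * (e * S)) with (e ^ 2 * S ^ 2) by ring. destruct HS as [_ ->].
  replace ((c * c - e ^ 2 * (1 - e ^ 2 / 4)) * (3 * e) - 2 * (e * S) * c * S1)
    with (e + 2 * e * (L - S * S1 * c)) by (unfold L, c; field).
  nra.
Qed.

Lemma inv_6m_bounds m : (1 <= m)%nat -> 0 < / (6 * INR m) <= 1/6.
Proof.
  intros Hm. apply le_INR in Hm. simpl in Hm. split.
  - apply Rinv_0_lt_compat. lra.
  - unfold Rdiv. rewrite Rmult_1_l. apply Rinv_le_contravar; lra.
Qed.

Definition tri_angle (a b c : R) : R := acos ((a ^ 2 + b ^ 2 - c ^ 2) / (2 * a * b)).

Section EuclideanTriangle.
Variables a b c : R.
Hypotheses (Ha : 0 < a) (Hb : 0 < b).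
Hypotheses (Hc_ab : c <= a + b) (Ha_bc : a <= b + c) (Hb_ac : b <= a + c).

Lemma tri_ratio_bound : -1 <= (a ^ 2 + b ^ 2 - c ^ 2) / (2 * a * b) <= 1.
Proof. apply ratio_in_unit_interval; [nra | split; nra]. Qed.

Lemma law_of_cosines : c ^ 2 = a ^ 2 + b ^ 2 - 2 * a * b * cos (tri_angle a b c).
Proof. unfold tri_angle. rewrite cos_acos by apply tri_ratio_bound. field. lra. Qed.

Lemma tri_sides_projection (Hc : 0 < c) : c * cos (tri_angle a c b) + b * cos (tri_angle a b c) = a.
Proof.
  unfold tri_angle. rewrite !cos_acos.
  - field. lra.
  - apply tri_ratio_bound.
  - apply ratio_in_unit_interval; [nra | split; nra].
Qed.

Lemma law_of_sines (Hc : 0 < c) : c * sin (tri_angle a c b) = b * sin (tri_angle a b c).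
Proof.
  unfold tri_angle. rewrite !sin_acos by (apply tri_ratio_bound ||
    (apply ratio_in_unit_interval; [nra | split; nra])).
  apply Rsqr_inj; try (apply Rmult_le_pos; [lra | apply sqrt_pos]).
  rewrite !Rsqr_mult, !Rsqr_sqrt by
    (pose proof tri_ratio_bound; pose proof (ratio_in_unit_interval (a ^ 2 + c ^ 2 - b ^ 2) (2 * a * c)
       ltac:(nra) ltac:(split; nra)); unfold Rsqr; nra).
  unfold Rsqr. field. lra.
Qed.

Lemma tri_angle_sum_le_PI (Hc : 0 < c) : tri_angle a c b + tri_angle a b c <= PI.
Proof.
  assert (H : tri_angle a c b <= PI - tri_angle a b c).
  { unfold tri_angle at 2. rewrite <- acos_opp. unfold tri_angle. apply acos_antimono.
    - pose proof tri_ratio_bound. lra.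
    - apply ratio_in_unit_interval; [nra | split; nra].
    - assert (E : (a ^ 2 + c ^ 2 - b ^ 2) / (2 * a * c) + (a ^ 2 + b ^ 2 - c ^ 2) / (2 * a * b)
                = (b + c) * (a ^ 2 - (b - c) ^ 2) / (2 * a * b * c)) by (field; lra).
      assert (0 <= (b + c) * (a ^ 2 - (b - c) ^ 2) / (2 * a * b * c)).
      { unfold Rdiv. apply Rle_mult_inv_pos.
        - apply Rmult_le_pos; [lra|].
          replace (a ^ 2 - (b - c) ^ 2) with ((a - b + c) * (a + b - c)) by ring.
          apply Rmult_le_pos; lra.
        - repeat apply Rmult_lt_0_compat; lra. }
      lra. }
  lra.
Qed.

Lemma tri_projection (Hc : 0 < c) phi :
  c * cos (phi + tri_angle a c b) - a * cos phi = b * cos (PI - tri_angle a b c + phi).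
Proof.
  rewrite <- (tri_sides_projection Hc) at 2.
  replace (PI - tri_angle a b c + phi) with (PI - (tri_angle a b c - phi)) by ring.
  rewrite cos_plus, cos_minus, cos_PI, sin_PI, cos_minus.
  replace (c * (cos phi * cos (tri_angle a c b) - sin phi * sin (tri_angle a c b)))
    with (c * cos (tri_angle a c b) * cos phi - sin phi * (c * sin (tri_angle a c b))) by ring.
  rewrite (law_of_sines Hc). ring.
Qed.

End EuclideanTriangle.

(* Rays from the origin at angles [0], [a], [a + b]: the chord between the points at distance
   1 on the outer rays crosses the middle ray at distance [s], splitting into pieces [u], [v]. *)
Lemma middle_ray_split a b : 0 <= a -> 0 <= b -> a + b < PI ->
  exists s u v, 0 < s /\ 0 <= u /\ 0 <= v /\ u + v = 2 * sin ((a + b) / 2) /\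
    1 + s ^ 2 - 2 * s * cos a = u ^ 2 /\ 1 + s ^ 2 - 2 * s * cos b = v ^ 2.
Proof.
  intros Ha Hb Hab. pose proof PI_RGT_0.
  set (h := (a + b) / 2). set (k := (b - a) / 2).
  assert (Ea : a = h - k) by (unfold h, k; field).
  assert (Eb : b = h + k) by (unfold h, k; field).
  assert (Hk : 0 < cos k) by (apply cos_gt_0; unfold k; lra).
  assert (Hh : 0 < cos h) by (apply cos_gt_0; unfold h; lra).
  assert (Hh2 : sin h ^ 2 + cos h ^ 2 = 1) by (pose proof (sin2_cos2 h); unfold Rsqr in *; lra).
  assert (Hk2 : sin k ^ 2 + cos k ^ 2 = 1) by (pose proof (sin2_cos2 k); unfold Rsqr in *; lra).
  assert (chord : forall w, (w = h - k \/ w = h + k) ->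
    1 + (cos h / cos k) ^ 2 - 2 * (cos h / cos k) * cos w = (sin w / cos k) ^ 2).
  { intros w [-> | ->];
      [rewrite cos_minus, sin_minus | rewrite cos_plus, sin_plus];
      apply (Rmult_eq_reg_r (cos k ^ 2)); try nra;
      field_simplify; try lra; nra. }
  exists (cos h / cos k), (sin a / cos k), (sin b / cos k).
  repeat split.
  - apply Rdiv_lt_0_compat; lra.
  - apply Rle_mult_inv_pos; [apply sin_ge_0 |]; lra.
  - apply Rle_mult_inv_pos; [apply sin_ge_0 |]; lra.
  - rewrite Ea, Eb, sin_minus, sin_plus. field. lra.
  - apply chord; auto.
  - apply chord; auto.
Qed.

(** * Angles in CAT(0) spaces *)

Section CAT0.
Variables (X : Type) (d : X -> X -> R).
Hypotheses (Hmetric : is_metric d) (Hgeod : is_geodesic_space d) (Hcat : CAT0_ineq d).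

Lemma dist_ge0 x y : 0 <= d x y. Proof. apply Hmetric. Qed.
Lemma dist_sym x y : d x y = d y x. Proof. apply Hmetric. Qed.
Lemma dist_triangle x y z : d x z <= d x y + d y z. Proof. apply Hmetric. Qed.
Lemma dist_eq0 x y : d x y = 0 -> x = y. Proof. apply Hmetric. Qed.
Lemma dist_refl x : d x x = 0. Proof. apply Hmetric; reflexivity. Qed.

Lemma dist_gt0 x y : x <> y -> 0 < d x y.
Proof.
  intros Hxy. destruct (dist_ge0 x y) as [|E]; [assumption|].
  now apply eq_sym, dist_eq0 in E.
Qed.

Lemma geodesic_dist g y z s t : min_geodesic d g y z -> 0 <= s <= t -> t <= 1 ->
  d (g s) (g t) = (t - s) * d y z.
Proof. intros (_ & _ & Hg) Hs Ht. rewrite Hg, Rabs_left1 by lra. ring. Qed.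

(* Uniqueness of geodesics: the CAT(0) inequality taken at [p] itself forces [d p (g s) = 0]. *)
Lemma on_segment_geodesic g y z p : min_geodesic d g y z -> on_segment d y z p -> 0 < d y z ->
  p = g (d y p / d y z).
Proof.
  intros Hg Hp HD. unfold on_segment in Hp.
  pose proof (dist_ge0 y p); pose proof (dist_ge0 p z).
  set (s := d y p / d y z).
  assert (Hs : 0 <= s <= 1) by (apply div_in_01; lra).
  assert (Hyp : d y p = s * d y z) by (unfold s; field; lra).
  pose proof (Hcat p y z g Hg s Hs) as HC.
  rewrite (dist_sym p y), Hyp in HC. replace (d p z) with ((1 - s) * d y z) in HC by lra.
  assert (d p (g s) ^ 2 <= 0) by (ring_simplify in HC; nra).
  apply dist_eq0. pose proof (dist_ge0 p (g s)). nra.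
Qed.

Lemma on_segment_at_dist y z r : 0 <= r <= d y z -> exists p, on_segment d y z p /\ d y p = r.
Proof.
  intros Hr. destruct (Hgeod y z) as [g Hg].
  destruct (Req_dec (d y z) 0) as [H0|H0].
  - exists y. unfold on_segment. rewrite dist_refl. lra.
  - pose proof (dist_ge0 y z).
    assert (Hs : 0 <= r / d y z <= 1) by (apply div_in_01; lra).
    set (s := r / d y z) in *.
    pose proof Hg as (G0 & G1 & _).
    assert (E1 : d y (g s) = s * d y z).
    { rewrite <- G0 at 1. rewrite (geodesic_dist g y z) by (auto; lra). ring. }
    assert (E2 : d (g s) z = (1 - s) * d y z).
    { rewrite <- G1 at 1. apply (geodesic_dist g y z); auto; lra. }
    exists (g s). unfold on_segment. rewrite E1, E2.
    split; unfold s; field; lra.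
Qed.

Lemma on_segment_end x y : on_segment d x y y.
Proof. unfold on_segment. rewrite dist_refl. lra. Qed.

Lemma on_segment_shorten x y p q : on_segment d x y p -> on_segment d x y q -> d x p <= d x q ->
  on_segment d x q p.
Proof.
  intros Hp Hq Hpq. destruct (Hgeod x y) as [g Hg]. unfold on_segment in *.
  pose proof (dist_ge0 x p); pose proof (dist_ge0 p y); pose proof (dist_ge0 q y).
  destruct (Req_dec (d x y) 0) as [Hxy|Hxy].
  - assert (Ep : x = p) by (apply dist_eq0; lra). assert (Eq : x = q) by (apply dist_eq0; lra).
    subst. rewrite dist_refl. lra.
  - assert (HD : 0 < d x y) by (pose proof (dist_ge0 x y); lra).
    set (sp := d x p / d x y). set (sq := d x q / d x y).
    assert (Hsp : 0 <= sp <= 1) by (apply div_in_01; lra).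
    assert (Hsq : 0 <= sq <= 1) by (apply div_in_01; lra).
    assert (sp <= sq) by (unfold sp, sq; apply Rmult_le_compat_r; [left; apply Rinv_0_lt_compat|]; lra).
    assert (Epq : d p q = sq * d x y - sp * d x y).
    { assert (Ep : p = g sp) by (apply on_segment_geodesic; auto).
      assert (Eq : q = g sq) by (apply on_segment_geodesic; auto).
      rewrite Ep, Eq, (geodesic_dist g x y) by (auto; lra). ring. }
    unfold sp, sq in Epq. field_simplify in Epq; lra.
Qed.

Lemma comp_angle_tri p x q : comp_angle d p x q = tri_angle (d x p) (d x q) (d p q).
Proof. reflexivity. Qed.

Lemma comp_angle_sym p x q : comp_angle d p x q = comp_angle d q x p.
Proof.
  rewrite !comp_angle_tri, (dist_sym q p). unfold tri_angle.
  replace (2 * d x q * d x p) with (2 * d x p * d x q) by ring.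
  f_equal. f_equal. ring.
Qed.

Lemma comp_angle_bound p x q : 0 <= comp_angle d p x q <= PI.
Proof. apply acos_bound. Qed.

Lemma dist_tri_sides p x q :
  d p q <= d x p + d x q /\ d x p <= d x q + d p q /\ d x q <= d x p + d p q.
Proof.
  pose proof (dist_triangle p x q); pose proof (dist_triangle x q p); pose proof (dist_triangle x p q).
  rewrite (dist_sym p x) in *; rewrite (dist_sym q p) in *. lra.
Qed.

Lemma comp_ratio_bound p x q : 0 < d x p -> 0 < d x q ->
  -1 <= (d x p ^ 2 + d x q ^ 2 - d p q ^ 2) / (2 * d x p * d x q) <= 1.
Proof. intros. pose proof (dist_tri_sides p x q). apply tri_ratio_bound; lra. Qed.

Lemma dist_law_of_cosines p x q : 0 < d x p -> 0 < d x q ->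
  d p q ^ 2 = d x p ^ 2 + d x q ^ 2 - 2 * d x p * d x q * cos (comp_angle d p x q).
Proof. intros. pose proof (dist_tri_sides p x q). apply law_of_cosines; lra. Qed.

(* The CAT(0) inequality with base point [z] on the geodesic from [x] to [y], rescaled. *)
Lemma comp_angle_le_on_segment x y z p : 0 < d x y -> 0 < d x z -> on_segment d x y p ->
  0 < d x p -> comp_angle d p x z <= comp_angle d y x z.
Proof.
  intros Hy Hz Hp Hp0. destruct (Hgeod x y) as [g Hg].
  pose proof (on_segment_geodesic g x y p Hg Hp Hy) as Ep.
  pose proof (dist_ge0 p y). unfold on_segment in Hp.
  set (s := d x p / d x y) in *.
  assert (Hs : 0 < s <= 1) by (split; [apply Rdiv_lt_0_compat | apply div_in_01]; lra).
  assert (Hxp : d x p = s * d x y) by (unfold s; field; lra).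
  pose proof (Hcat z x y g Hg s ltac:(lra)) as HC. rewrite <- Ep in HC.
  rewrite (dist_sym z p), (dist_sym z x), (dist_sym z y) in HC.
  apply acos_antimono; try (apply comp_ratio_bound; lra).
  rewrite Hxp. set (D := d x y) in *. set (e := d x z) in *.
  replace ((D ^ 2 + e ^ 2 - d y z ^ 2) / (2 * D * e))
    with (s * (D ^ 2 + e ^ 2 - d y z ^ 2) / (2 * (s * D) * e)) by (field; lra).
  unfold Rdiv. apply Rmult_le_compat_r; [left; apply Rinv_0_lt_compat; nra | nra].
Qed.

Lemma comp_angle_le_on_segments x y z p q : 0 < d x y -> 0 < d x z ->
  on_segment d x y p -> on_segment d x z q -> 0 < d x p -> 0 < d x q ->
  comp_angle d p x q <= comp_angle d y x z.
Proof.
  intros. apply Rle_trans with (comp_angle d p x z).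
  - rewrite (comp_angle_sym p x q), (comp_angle_sym p x z). apply comp_angle_le_on_segment; auto.
  - apply comp_angle_le_on_segment; auto.
Qed.

(* By monotonicity, the Alexandrov angle is the infimum of the comparison angles. *)
Lemma angle_limit_exists x y z : 0 < d x y -> 0 < d x z -> exists A, angle_limit d x y z A /\
  0 <= A /\ forall p q, on_segment d x y p -> on_segment d x z q -> 0 < d x p -> 0 < d x q ->
    A <= comp_angle d p x q.
Proof.
  intros Hy Hz.
  destruct (nonneg_inf_exists (fun r => exists p q, on_segment d x y p /\ on_segment d x z q /\
              0 < d x p /\ 0 < d x q /\ r = comp_angle d p x q)) as (A & HA & Hlow & Happrox).
  - exists (comp_angle d y x z), y, z. repeat split; auto using on_segment_end.
  - intros r (p & q & _ & _ & _ & _ & ->). apply comp_angle_bound.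
  - exists A. split; [| split; [assumption | intros p q ? ? ? ?; apply Hlow; exists p, q; auto]].
    intros e He. destruct (Happrox e He) as (r & (p0 & q0 & Hp0 & Hq0 & Hxp0 & Hxq0 & ->) & Hr).
    exists (Rmin (d x p0) (d x q0)). split; [apply Rmin_glb_lt; auto|].
    intros p q Hp Hq [Hxp Hp1] [Hxq Hq1].
    pose proof (Rmin_l (d x p0) (d x q0)); pose proof (Rmin_r (d x p0) (d x q0)).
    assert (comp_angle d p x q <= comp_angle d p0 x q0).
    { apply comp_angle_le_on_segments; auto;
        [apply on_segment_shorten with y | apply on_segment_shorten with z]; auto; lra. }
    assert (A <= comp_angle d p x q) by (apply Hlow; exists p, q; auto).
    apply Rabs_def1; lra.
Qed.

Lemma angle_limit_unique x y z A1 A2 : 0 < d x y -> 0 < d x z ->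
  angle_limit d x y z A1 -> angle_limit d x y z A2 -> A1 = A2.
Proof.
  intros Hy Hz H1 H2. apply NNPP. intros Hne.
  set (e := Rabs (A1 - A2) / 2).
  assert (He : 0 < e) by (unfold e; pose proof (Rabs_pos_lt (A1 - A2)); lra).
  destruct (H1 e He) as (r1 & Hr1 & P1). destruct (H2 e He) as (r2 & Hr2 & P2).
  set (M := Rmin (Rmin r1 r2) (Rmin (d x y) (d x z))).
  assert (HM : 0 < M /\ M <= r1 /\ M <= r2 /\ M <= d x y /\ M <= d x z).
  { unfold M. pose proof (Rmin_l (Rmin r1 r2) (Rmin (d x y) (d x z))).
    pose proof (Rmin_r (Rmin r1 r2) (Rmin (d x y) (d x z))).
    pose proof (Rmin_l r1 r2); pose proof (Rmin_r r1 r2).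
    pose proof (Rmin_l (d x y) (d x z)); pose proof (Rmin_r (d x y) (d x z)).
    split; [repeat apply Rmin_glb_lt; auto | lra]. }
  destruct (on_segment_at_dist x y (M / 2)) as (p & Hp & Hxp); [lra |].
  destruct (on_segment_at_dist x z (M / 2)) as (q & Hq & Hxq); [lra |].
  pose proof (P1 p q Hp Hq ltac:(lra) ltac:(lra)) as Q1.
  pose proof (P2 p q Hp Hq ltac:(lra) ltac:(lra)) as Q2.
  apply Rabs_def2 in Q1, Q2. unfold e in *.
  revert Q1 Q2. unfold Rabs. destruct (Rcase_abs (A1 - A2)); lra.
Qed.

Lemma gangle_eq x y z A : 0 < d x y -> 0 < d x z -> angle_limit d x y z A -> gangle d x y z = A.
Proof.
  intros Hy Hz HA. apply (angle_limit_unique x y z); auto.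
  unfold gangle. apply epsilon_spec. eauto.
Qed.

Lemma gangle_limit x y z : 0 < d x y -> 0 < d x z -> angle_limit d x y z (gangle d x y z).
Proof.
  intros Hy Hz. destruct (angle_limit_exists x y z Hy Hz) as (A & HA & _).
  now rewrite (gangle_eq x y z A).
Qed.

Lemma gangle_nonneg x y z : 0 < d x y -> 0 < d x z -> 0 <= gangle d x y z.
Proof.
  intros Hy Hz. destruct (angle_limit_exists x y z Hy Hz) as (A & HA & HA0 & _).
  now rewrite (gangle_eq x y z A).
Qed.

Lemma gangle_le_comp_angle x y z p q : 0 < d x y -> 0 < d x z ->
  on_segment d x y p -> on_segment d x z q -> 0 < d x p -> 0 < d x q ->
  gangle d x y z <= comp_angle d p x q.
Proof.
  intros Hy Hz. destruct (angle_limit_exists x y z Hy Hz) as (A & HA & _ & HAle).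
  rewrite (gangle_eq x y z A); auto.
Qed.

Lemma gangle_le_comp_angle_ends x y z : 0 < d x y -> 0 < d x z ->
  gangle d x y z <= comp_angle d y x z.
Proof. intros. apply gangle_le_comp_angle; auto using on_segment_end. Qed.

Lemma gangle_le_PI x y z : 0 < d x y -> 0 < d x z -> gangle d x y z <= PI.
Proof.
  intros. eapply Rle_trans; [apply gangle_le_comp_angle_ends; auto | apply comp_angle_bound].
Qed.

Lemma gangle_sym x y z : 0 < d x y -> 0 < d x z -> gangle d x y z = gangle d x z y.
Proof.
  intros Hy Hz. symmetry. apply gangle_eq; auto.
  intros e He. destruct (gangle_limit x y z Hy Hz e He) as (r & Hr & P).
  exists r. split; auto. intros p q Hp Hq Hp1 Hq1. rewrite comp_angle_sym. auto.
Qed.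

Lemma gangle_refl x y : 0 < d x y -> gangle d x y y = 0.
Proof.
  intros Hy. pose proof (gangle_nonneg x y y Hy Hy). pose proof (gangle_le_comp_angle_ends x y y Hy Hy).
  rewrite comp_angle_tri in *. unfold tri_angle in *. rewrite dist_refl in *.
  replace ((d x y ^ 2 + d x y ^ 2 - 0 ^ 2) / (2 * d x y * d x y)) with 1 in * by (field; lra).
  rewrite acos_1 in *. lra.
Qed.

Lemma dist_le_of_comp_angle_le p x q a : 0 < d x p -> 0 < d x q ->
  comp_angle d p x q <= a -> a <= PI ->
  d p q ^ 2 <= d x p ^ 2 + d x q ^ 2 - 2 * d x p * d x q * cos a.
Proof.
  intros Hp Hq Ha Ha'. rewrite (dist_law_of_cosines p x q) by auto. pose proof (comp_angle_bound p x q).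
  assert (cos a <= cos (comp_angle d p x q)) by (apply cos_decr_1; lra).
  assert (0 <= d x p * d x q) by nra. nra.
Qed.

Lemma dist_ge_of_comp_angle_ge p x q a : 0 < d x p -> 0 < d x q ->
  a <= comp_angle d p x q -> 0 <= a ->
  d x p ^ 2 + d x q ^ 2 - 2 * d x p * d x q * cos a <= d p q ^ 2.
Proof.
  intros Hp Hq Ha Ha'. rewrite (dist_law_of_cosines p x q) by auto. pose proof (comp_angle_bound p x q).
  assert (cos (comp_angle d p x q) <= cos a) by (apply cos_decr_1; lra).
  assert (0 <= d x p * d x q) by nra. nra.
Qed.

(* If [c > a + b], take points at distances [t], [s t], [t] on the three geodesics
   (with [s] from [middle_ray_split]): comparison with the plane forces
   [d p1 p3 >= 2 t sin (c/2)] while [d p1 p2 + d p2 p3 < 2 t sin (c/2)]. *)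
Lemma gangle_triangle x y z w : 0 < d x y -> 0 < d x z -> 0 < d x w ->
  gangle d x y w <= gangle d x y z + gangle d x z w.
Proof.
  intros Hy Hz Hw.
  set (a := gangle d x y z). set (b := gangle d x z w). set (c := gangle d x y w).
  destruct (Rle_or_lt c (a + b)) as [|Hlt]; [assumption | exfalso].
  assert (Ha : 0 <= a) by (apply gangle_nonneg; auto).
  assert (Hb : 0 <= b) by (apply gangle_nonneg; auto).
  assert (Hc : c <= PI) by (apply gangle_le_PI; auto).
  set (de := (c - a - b) / 4). assert (Hde : 0 < de) by (unfold de; lra).
  destruct (middle_ray_split (a + de) (b + de)) as (s & u & v & Hs & Hu & Hv & Huv & Hpu & Hpv);
    [lra | lra | unfold de; lra |].
  destruct (gangle_limit x y z Hy Hz de Hde) as (r1 & Hr1 & L1).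
  destruct (gangle_limit x z w Hz Hw de Hde) as (r2 & Hr2 & L2).
  fold a in L1. fold b in L2.
  set (M := Rmin (Rmin (d x y) (d x w)) (Rmin (Rmin r1 r2) (d x z))).
  assert (HM : 0 < M /\ M <= d x y /\ M <= d x w /\ M <= r1 /\ M <= r2 /\ M <= d x z).
  { unfold M. pose proof (Rmin_l (Rmin (d x y) (d x w)) (Rmin (Rmin r1 r2) (d x z))).
    pose proof (Rmin_r (Rmin (d x y) (d x w)) (Rmin (Rmin r1 r2) (d x z))).
    pose proof (Rmin_l (d x y) (d x w)); pose proof (Rmin_r (d x y) (d x w)).
    pose proof (Rmin_l (Rmin r1 r2) (d x z)); pose proof (Rmin_r (Rmin r1 r2) (d x z)).
    pose proof (Rmin_l r1 r2); pose proof (Rmin_r r1 r2).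
    split; [repeat apply Rmin_glb_lt; auto | lra]. }
  destruct (small_scale M s) as (t & Ht & HtM & HstM); [lra | lra |].
  destruct (on_segment_at_dist x y t) as (p1 & S1 & D1); [lra |].
  destruct (on_segment_at_dist x z (s * t)) as (p2 & S2 & D2); [nra |].
  destruct (on_segment_at_dist x w t) as (p3 & S3 & D3); [lra |].
  assert (C12 : comp_angle d p1 x p2 <= a + de).
  { pose proof (L1 p1 p2 S1 S2 ltac:(lra) ltac:(nra)) as C. apply Rabs_def2 in C. lra. }
  assert (C23 : comp_angle d p2 x p3 <= b + de).
  { pose proof (L2 p2 p3 S2 S3 ltac:(nra) ltac:(lra)) as C. apply Rabs_def2 in C. lra. }
  assert (C13 : c <= comp_angle d p1 x p3) by (apply gangle_le_comp_angle; auto; lra).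
  assert (B12 : d p1 p2 <= t * u).
  { pose proof (dist_le_of_comp_angle_le p1 x p2 (a + de) ltac:(lra) ltac:(nra) C12
      ltac:(unfold de; lra)) as Hd.
    rewrite D1, D2 in Hd. pose proof (dist_ge0 p1 p2).
    replace (t ^ 2 + (s * t) ^ 2 - 2 * t * (s * t) * cos (a + de)) with (t ^ 2 * u ^ 2) in Hd
      by (rewrite <- Hpu; ring).
    apply Rsqr_incr_0_var; [rewrite !Rsqr_pow2; nra | nra]. }
  assert (B23 : d p2 p3 <= t * v).
  { pose proof (dist_le_of_comp_angle_le p2 x p3 (b + de) ltac:(nra) ltac:(lra) C23
      ltac:(unfold de; lra)) as Hd.
    rewrite D2, D3 in Hd. pose proof (dist_ge0 p2 p3).
    replace ((s * t) ^ 2 + t ^ 2 - 2 * (s * t) * t * cos (b + de)) with (t ^ 2 * v ^ 2) in Hd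
      by (rewrite <- Hpv; ring).
    apply Rsqr_incr_0_var; [rewrite !Rsqr_pow2; nra | nra]. }
  assert (B13 : (2 * t * sin (c / 2)) ^ 2 <= d p1 p3 ^ 2).
  { pose proof (dist_ge_of_comp_angle_ge p1 x p3 c ltac:(lra) ltac:(lra) C13
      ltac:(apply gangle_nonneg; auto)) as Hd.
    rewrite D1, D3 in Hd. replace c with (2 * (c / 2)) in Hd by field.
    rewrite cos_2a_sin in Hd. nra. }
  assert (Hsin : sin ((a + de + (b + de)) / 2) < sin (c / 2)).
  { apply sin_increasing_1; pose proof PI_RGT_0; unfold de; lra. }
  pose proof (dist_triangle p1 p2 p3). pose proof (dist_ge0 p1 p3).
  assert (d p1 p3 < 2 * t * sin (c / 2)) by nra.
  nra.
Qed.

Lemma is_dir_const x y : 0 < d x y -> is_dir d x (fun _ => y).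
Proof.
  intros Hy. split.
  - intros _ E. subst. rewrite dist_refl in Hy. lra.
  - intros e He. exists 0%nat. intros. rewrite gangle_refl; auto.
Qed.

Lemma is_dir_dist_gt0 x U n : is_dir d x U -> 0 < d x (U n).
Proof. intros [HU _]. apply dist_gt0. auto. Qed.

Lemma gangle_diff x a b a' b' : 0 < d x a -> 0 < d x b -> 0 < d x a' -> 0 < d x b' ->
  Rabs (gangle d x a b - gangle d x a' b') <= gangle d x a a' + gangle d x b b'.
Proof.
  intros Ha Hb Ha' Hb'.
  pose proof (gangle_triangle x a a' b Ha Ha' Hb). pose proof (gangle_triangle x a' b' b Ha' Hb' Hb).
  pose proof (gangle_triangle x a' a b' Ha' Ha Hb'). pose proof (gangle_triangle x a b b' Ha Hb Hb').
  rewrite (gangle_sym x b' b), (gangle_sym x a' a) in * by auto.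
  apply Rabs_le. lra.
Qed.

Lemma dangle_limit x U V : is_dir d x U -> is_dir d x V ->
  Un_cv (fun n => gangle d x (U n) (V n)) (dangle d x U V).
Proof.
  intros HU HV. unfold dangle. apply epsilon_spec.
  assert (Cauchy_crit (fun n => gangle d x (U n) (V n))) as HC; [|destruct (R_complete _ HC); eauto].
  intros e He.
  destruct (proj2 HU (e / 2) ltac:(lra)) as [N1 P1]. destruct (proj2 HV (e / 2) ltac:(lra)) as [N2 P2].
  exists (max N1 N2). intros n k Hn Hk. unfold R_dist.
  eapply Rle_lt_trans; [apply gangle_diff; apply is_dir_dist_gt0; auto |].
  assert (gangle d x (U n) (U k) < e / 2) by (apply P1; lia).
  assert (gangle d x (V n) (V k) < e / 2) by (apply P2; lia). lra.
Qed.

Lemma dangle_sym x U V : is_dir d x U -> is_dir d x V -> dangle d x U V = dangle d x V U.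
Proof.
  intros HU HV. apply (UL_sequence (fun n => gangle d x (U n) (V n))).
  - apply dangle_limit; auto.
  - intros e He. destruct (dangle_limit x V U HV HU e He) as [N HN].
    exists N. intros n Hn. rewrite gangle_sym; auto using is_dir_dist_gt0.
Qed.

Lemma dangle_range x U V : is_dir d x U -> is_dir d x V -> 0 <= dangle d x U V <= PI.
Proof.
  intros HU HV. pose proof (dangle_limit x U V HU HV). split.
  - apply (Rle_cv_lim (Un := fun _ => 0) (Vn := fun n => gangle d x (U n) (V n)));
      auto using Un_cv_const.
    intros; apply gangle_nonneg; auto using is_dir_dist_gt0.
  - apply (Rle_cv_lim (Un := fun n => gangle d x (U n) (V n)) (Vn := fun _ => PI));
      auto using Un_cv_const.
    intros; apply gangle_le_PI; auto using is_dir_dist_gt0.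
Qed.

Lemma dangle_triangle_point x U a b : is_dir d x U -> 0 < d x a -> 0 < d x b ->
  dangle d x U (fun _ => b) <= dangle d x U (fun _ => a) + gangle d x a b.
Proof.
  intros HU Ha Hb.
  apply (Rle_cv_lim (Un := fun n => gangle d x (U n) b)
                    (Vn := fun n => gangle d x (U n) a + gangle d x a b)).
  - intros n. apply gangle_triangle; auto using is_dir_dist_gt0.
  - apply (dangle_limit x U (fun _ => b)); auto using is_dir_const.
  - apply CV_plus; [apply (dangle_limit x U (fun _ => a)); auto using is_dir_const | apply Un_cv_const].
Qed.

(** * Projections along a self-contracted curve *)

Lemma Pproj_neq x U y : y <> x -> Pproj d x U y = d x y * cos (dangle d x U (fun _ => y)).
Proof. intros Hyx. unfold Pproj. destruct (excluded_middle_informative (y = x)); tauto. Qed.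

Lemma Pproj_abs_le x U y : Rabs (Pproj d x U y) <= d x y.
Proof.
  unfold Pproj. destruct (excluded_middle_informative (y = x)).
  - rewrite Rabs_R0. apply dist_ge0.
  - rewrite Rabs_mult, (Rabs_pos_eq (d x y)) by apply dist_ge0.
    apply Rle_trans with (d x y * 1); [|lra].
    apply Rmult_le_compat_l; [apply dist_ge0 | apply Rabs_le, COS_bound].
Qed.

(* Comparison with the Euclidean triangle [x o y]: the Alexandrov angles are bounded by the
   comparison angles, and in the plane the projection of [y - x] onto a direction at angle
   [phi] from [o - x] exceeds that of [o - x] by [d o y * cos (PI - (angle at o) + phi)]. *)
Lemma Pproj_gain x o y gamma th A0 e : x <> o -> o <> y -> x <> y -> is_dir d x gamma ->
  dangle d x gamma (fun _ => o) <= th -> PI - th - A0 <= gangle d o x y ->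
  2 * th + A0 <= PI -> e <= cos (2 * th + A0) ->
  Pproj d x gamma o + e * d o y <= Pproj d x gamma y.
Proof.
  intros Hxo Hoy Hxy Hgam Hphi Hbeta Hsum He.
  assert (Dxo : 0 < d x o) by (apply dist_gt0; auto).
  assert (Doy : 0 < d o y) by (apply dist_gt0; auto).
  assert (Dxy : 0 < d x y) by (apply dist_gt0; auto).
  assert (Dox : 0 < d o x) by (rewrite dist_sym; auto).
  rewrite !Pproj_neq by auto.
  set (phi := dangle d x gamma (fun _ => o)) in *.
  set (psi := dangle d x gamma (fun _ => y)).
  assert (Hphi0 : 0 <= phi) by (apply dangle_range; auto using is_dir_const).
  assert (Hpsi : 0 <= psi <= phi + gangle d x o y).
  { split; [apply dangle_range; auto using is_dir_const | apply dangle_triangle_point; auto]. }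
  set (al := tri_angle (d x o) (d x y) (d o y)).
  set (be := tri_angle (d x o) (d o y) (d x y)).
  assert (Hal : gangle d x o y <= al) by (apply gangle_le_comp_angle_ends; auto).
  assert (Hbe : gangle d o x y <= be).
  { unfold be. rewrite (dist_sym x o). apply gangle_le_comp_angle_ends; auto. }
  destruct (dist_tri_sides o x y) as (T1 & T2 & T3).
  assert (Hab : al + be <= PI) by (apply tri_angle_sum_le_PI; lra).
  pose proof (acos_bound ((d x o ^ 2 + d x y ^ 2 - d o y ^ 2) / (2 * d x o * d x y))) as Hal'.
  pose proof (acos_bound ((d x o ^ 2 + d o y ^ 2 - d x y ^ 2) / (2 * d x o * d o y))) as Hbe'.
  fold al in Hal'. fold be in Hbe'.
  pose proof (tri_projection (d x o) (d o y) (d x y) Dxo Doy ltac:(lra) ltac:(lra) ltac:(lra) Dxy phi)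
    as Hproj.
  fold al be in Hproj.
  assert (cos (phi + al) <= cos psi) by (apply cos_decr_1; lra).
  assert (e <= cos (PI - be + phi)) by (eapply Rle_trans; [eassumption | apply cos_decr_1; lra]).
  nra.
Qed.

Lemma self_contracted_dist_le_twice l xi tau T s : self_contracted d l xi ->
  in_dom l tau -> in_dom l s -> tau <= T <= s ->
  d (xi tau) (xi T) <= 2 * d (xi tau) (xi s).
Proof.
  intros Hsc Htau Hs HT. pose proof (Hsc tau T s Htau Hs HT).
  pose proof (dist_triangle (xi tau) (xi s) (xi T)). rewrite (dist_sym (xi s) (xi T)) in *. lra.
Qed.

Lemma Pproj_gain_along_curve l xi tau bg T x gamma e : 0 < e <= 1/6 ->
  self_contracted d l xi -> in_dom l tau -> is_dir d (xi tau) bg ->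
  (forall t, tau < t -> in_dom l t -> xi t <> xi tau ->
     dangle d (xi tau) bg (fun _ => xi t) <= acos (3 * e)) ->
  0 < d (xi tau) x -> dangle d (xi tau) (fun _ => x) bg >= PI - 2 * asin (e / 2) ->
  is_dir d x gamma -> dangle d x (fun _ => xi tau) gamma <= 2 * asin (e / 2) ->
  tau < T -> forall s, T <= s -> in_dom l s ->
  Pproj d x gamma (xi tau) + e / 2 * d (xi tau) (xi T) <= Pproj d x gamma (xi s).
Proof.
  intros He Hsc Htau Hbg Hcurve Hox Hxang Hgam Hgamx HT s Hs Hsd.
  set (o := xi tau) in *. set (y := xi s).
  assert (HoT : d o (xi T) <= 2 * d o y) by (apply self_contracted_dist_le_twice with l; auto; lra).
  pose proof (dist_ge0 o (xi T)).
  destruct (classic (y = o)) as [Eyo | Nyo].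
  { rewrite Eyo, dist_refl in HoT. rewrite Eyo. nra. }
  assert (Hxo : x <> o) by (intros ->; rewrite dist_refl in Hox; lra).
  assert (Doy : 0 < d o y) by (apply dist_gt0; auto).
  destruct (angle_budget e He) as [Hsum Hcos].
  pose proof (chord_angle_le_PI4 e ltac:(lra)) as Hth.
  assert (HA0 : acos (3 * e) <= PI / 2) by (rewrite <- acos_0; apply acos_antimono; lra).
  set (th := 2 * asin (e / 2)) in *. set (A0 := acos (3 * e)) in *.
  assert (Hbeta : PI - th - A0 <= gangle d o x y).
  { pose proof (dangle_triangle_point o bg y x Hbg Doy Hox).
    assert (dangle d o bg (fun _ => y) <= A0) by (apply Hcurve; auto; lra).
    rewrite (dangle_sym o (fun _ => x) bg), (gangle_sym o y x) in * by auto using is_dir_const.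
    lra. }
  assert (Hxy : x <> y).
  { intros <-. rewrite gangle_refl in Hbeta by auto. pose proof PI_RGT_0. lra. }
  assert (Dxo : 0 < d x o) by (rewrite dist_sym; auto).
  rewrite dangle_sym in Hgamx by auto using is_dir_const.
  pose proof (Pproj_gain x o y gamma th A0 e Hxo (not_eq_sym Nyo) Hxy Hgam Hgamx Hbeta Hsum Hcos).
  nra.
Qed.

Lemma cond_TB_ge1 Omega m x y : cond_TB d Omega m -> Omega x -> 0 < d x y -> (1 <= m)%nat.
Proof.
  intros HTB Hx Hy. apply (HTB x Hx 1%nat (fun _ _ => y)).
  - intros i Hi. apply is_dir_const; auto.
  - intros i j Hi Hj Hij. exfalso. lia.
Qed.

End CAT0.

Theorem mainTheorem15 (X : Type) (d : X -> X -> R) (Omega : X -> Prop) (m : nat)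
  (l : option R) (xi : R -> X) (tau sigma : R) (bargamma : nat -> X) :
  complete_CAT0 d ->
  bounded_set d Omega ->
  cond_TB d Omega m ->
  self_contracted d l xi ->
  (forall t, in_dom l t -> Omega (xi t)) ->
  in_dom l tau ->
  is_dir d (xi tau) bargamma ->
  (forall t, tau < t -> in_dom l t -> xi t <> xi tau ->
     dangle d (xi tau) bargamma (fun _ => xi t) <= acos (3 * / (6 * INR m))) ->
  0 < sigma ->
  forall (T : R) (x : X) (gamma : nat -> X),
    tau < T -> in_dom l T ->
    (0 < d (xi tau) x < sigma /\
     dangle d (xi tau) (fun _ => x) bargamma >= PI - 2 * asin (/ (6 * INR m) / 2)) ->
    is_dir d x gamma ->
    dangle d x (fun _ => xi tau) gamma <= 2 * asin (/ (6 * INR m) / 2) ->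
    Pi_length d x gamma (Xi_set l xi T)
      <= Pi_length d x gamma (Xi_set l xi tau) - / (6 * INR m) / 2 * d (xi tau) (xi T).
Proof.
  intros (Hmetric & Hgeod & Hcat & _) [B HB] HTB Hsc HOm Htau Hbg Hcurve _ T x gamma HT HTd
    [[Hox _] Hxang] Hgam Hgamx.
  pose proof (inv_6m_bounds m
    (cond_TB_ge1 X d Hmetric Hgeod Hcat Omega m (xi tau) x HTB (HOm tau Htau) Hox)) as He.
  unfold Pi_length.
  apply (hull_length_shrink _ _ (d x (xi tau) + B) (Pproj d x gamma (xi tau))).
  - intros r (y & (s & Hs & Hsd & ->) & ->). exists (xi s). split; auto. exists s. split; auto. lra.
  - exists (Pproj d x gamma (xi T)), (xi T). split; auto. exists T. split; auto. lra.
  - exists (xi tau). split; auto. exists tau. split; auto. lra.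
  - intros r (y & (s & _ & Hsd & ->) & ->).
    eapply Rle_trans; [apply Pproj_abs_le; auto |].
    pose proof (dist_triangle X d Hmetric x (xi tau) (xi s)).
    pose proof (HB (xi tau) (xi s) (HOm tau Htau) (HOm s Hsd)). lra.
  - intros r (y & (s & Hs & Hsd & ->) & ->).
    apply (Pproj_gain_along_curve X d Hmetric Hgeod Hcat l xi tau bargamma T x gamma); auto.
Qed.
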